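(* For every $n\ge0$, $$P_n=\sum_{m=0}^{\lfloor n/2\rfloor}\frac{q^{-m(2m+1-2\delta_{n\equiv t})}}{(1-q^{-4})(1-q^{-8})\cdots(1-q^{-4m})}\Delta_{n-2m},\qquad \Delta_n=\sum_{m=0}^{\lfloor n/2\rfloor}(-1)^m\frac{q^{-m(2\delta_{n\not\equiv t}+1)}}{(1-q^{-4})(1-q^{-8})\cdots(1-q^{-4m})}P_{n-2m}.$$
   Context: Fix $t\in\{0,1\}$. Let $\mathbf U^\imath_t=\mathbb Q(q)[B]$ be the polynomial algebra in $B$ over $\mathbb Q(q)$, $[n]=(q^n-q^{-n})/(q-q^{-1})$, $[n]!=[1]\cdots[n]$; $\delta_{n\equiv t}$ is $1$ if $n\equiv t\pmod2$ and $0$ otherwise, and $\delta_{n\not\equiv t}=1-\delta_{n\equiv t}$. The PBW basis $\Delta_n$ is defined by $\Delta_0=1$, $B\Delta_n=[n+1]\Delta_{n+1}+\frac{q^{n-1}}{1-q^{-2}}\Delta_{n-1}$ ($\Delta_{-1}=0$). The $\imath$-canonical basis is $P_n=\frac{B^{\sigma_t(n)}}{[n]!}\prod_{0\le k\le n-1,\ k\equiv t\ (2)}(B^2-[k]^2)$, where $\sigma_t(n)=0$ for $n$ even, $-1$ for $n$ odd and $t=0$, $1$ for $n$ odd and $t=1$ (when $\sigma_t(n)=-1$ the product contains the factor $B^2$, so $P_n$ is a polynomial). *)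

From HB Require Import structures.
From mathcomp Require Import all_boot all_order all_algebra.
Set Implicit Arguments. Unset Strict Implicit. Unset Printing Implicit Defensive.
Import Order.TTheory GRing.Theory Num.Theory.
Local Open Scope ring_scope.

Definition Qq : fieldType := {fraction {poly rat}}.

Definition q : Qq := FracField.tofrac ('X : {poly rat}).

Definition qpow (z : int) : Qq := q ^ z.

Definition qint (n : nat) : Qq :=
  (qpow n%:Z - qpow (- n%:Z)) / (qpow 1 - qpow (-1)).

Definition qfact (n : nat) : Qq := \prod_(1 <= i < n.+1) qint i.

(* U^i_t = Q(q)[B]; the generator B is the polynomial variable 'X. *)
Notation U := {poly Qq}.

(* (Delta_n, Delta_{n+1}) via the recursion
   B Delta_n = [n+1] Delta_{n+1} + q^{n-1}/(1-q^{-2}) Delta_{n-1},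
   Delta_0 = 1, Delta_{-1} = 0. *)
Fixpoint DeltaPair (n : nat) : U * U :=
  match n with
  | 0 => (1, (qint 1)^-1 *: ('X * 1))
  | n'.+1 =>
      let: (a, b) := DeltaPair n' in
      (b, (qint n'.+2)^-1 *:
            ('X * b - (qpow (n'%:Z) / (1 - qpow (-2))) *: a))
  end.

Definition Delta (n : nat) : U := (DeltaPair n).1.

(* delta_{n = t mod 2}, with t in {0,1} encoded as a bool. *)
Definition dlt (t : bool) (n : nat) : int := if odd n == t then 1 else 0.

(* The iota-canonical basis P_n = B^{sigma_t(n)}/[n]! * prod_{0<=k<n, k = t mod 2}(B^2-[k]^2).
   For sigma_t(n) = -1 the product contains the factor B^2 (k = 0), so the
   division by B is exact; we use polynomial division by 'X. *)
Definition Pprod (t : bool) (n : nat) : U :=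
  \prod_(0 <= k < n | odd k == t) ('X ^+ 2 - ((qint k) ^+ 2)%:P).

Definition P (t : bool) (n : nat) : U :=
  (qfact n)^-1 *:
    (if ~~ odd n then Pprod t n
     else if t then 'X * Pprod t n
     else Pprod t n %/ 'X).

Definition qden (m : nat) : Qq := \prod_(1 <= i < m.+1) (1 - qpow (- (4 * i%:Z))).

From HB Require Import structures.
From mathcomp Require Import all_boot all_order all_algebra.
From mathcomp Require Import zify ring.
Set Implicit Arguments.
Unset Strict Implicit.
Unset Printing Implicit Defensive.
Import Order.TTheory GRing.Theory Num.Theory.
Local Open Scope ring_scope.

(* Both (Delta_n) and (P_n) satisfy three-term recurrences
     B W_n = [n+1] W_(n+1) + b_n W_(n-1),   W_(-1) = 0,  W_0 = 1,
   with the same leading coefficients [n+1]: for Delta_n this is its definition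
   (b_n = q^(n-1)/(1-q^-2)), for P_n it follows from the product formula
   (b_n = delta_(n=t) [n]).  Given two such families (W_n) and (V_n), the
   candidate sum V'_n = sum_m c_(n,m) W_(n-2m) with c_(n,0) = 1 satisfies the
   recurrence of (V_n) as soon as the c_(n,m) satisfy the recursion obtained by
   multiplying by B and comparing coefficients of W_(n-2m); by uniqueness of
   solutions, V' = V.  Both claimed coefficient families have the shape
   c_(n,m) = q^(2m delta_(n=t)) gamma_m, and their recursion reduces to a
   rational identity in q, q^n and q^m for each parity of n. *)

Section ThreeTermRecurrence.

Variable F : fieldType.

Definition three_term (a b : nat -> F) (W : nat -> {poly F}) : Prop :=
  [/\ W 0%N = 1, 'X = a 1%N *: W 1%N
    & forall n, 'X * W n.+1 = a n.+2 *: W n.+2 + b n.+1 *: W n].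

Lemma three_term_uniq (a b : nat -> F) (W V : nat -> {poly F}) :
  (forall n, a n.+1 != 0) -> three_term a b W -> three_term a b V -> W =1 V.
Proof.
move=> a_neq0 [W0 W1 WS] [V0 V1 VS].
elim/ltn_ind => -[|[|n]] IH; first by rewrite W0 V0.
  by apply: (scalerI (a_neq0 0)); rewrite -W1 -V1.
apply: (scalerI (a_neq0 n.+1)); apply: (addIr (b n.+1 *: W n)).
by rewrite -WS [in RHS]IH // -VS !IH.
Qed.

Lemma three_term_normalize (a b beta : nat -> F) (U : nat -> {poly F}) :
  (forall n, a n.+1 != 0) -> (forall n, beta n.+1 = a n.+1 * b n.+1) ->
  three_term (fun=> 1) beta U ->
  three_term a b (fun n => (\prod_(1 <= i < n.+1) a i)^-1 *: U n).
Proof.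
move=> a_neq0 beta_ab [U0 U1 US].
have prodS n : \prod_(1 <= i < n.+2) a i = \prod_(1 <= i < n.+1) a i * a n.+1.
  by rewrite big_nat_recr.
have prod_neq0 n : \prod_(1 <= i < n.+1) a i != 0.
  rewrite prodf_seq_neq0; apply/allP => -[|i]; rewrite mem_index_iota // => _.
  exact: a_neq0.
split.
- by rewrite big_geq // invr1 scale1r.
- by rewrite big_nat1 scalerA divff // scale1r U1 scale1r.
move=> n; rewrite -scalerAr US scale1r scalerDr !scalerA beta_ab !prodS.
by congr (_ *: _ + _ *: _); field; rewrite ?a_neq0 ?prod_neq0.
Qed.

Section Expansion.

Variables (a b b' : nat -> F) (W V : nat -> {poly F}) (c : nat -> nat -> F).
Hypotheses (a0 : a 0%N = 0) (a_neq0 : forall n, a n.+1 != 0).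
Hypotheses (W_rec : three_term a b W) (V_rec : three_term a b' V).
Hypotheses (c_0 : forall n, c n 0 = 1)
  (c_rec : forall n m, (2 * m <= n)%N ->
     a n.+2 * c n.+2 m.+1 =
       c n.+1 m.+1 * a (n - 2 * m) + c n.+1 m * b (n.+1 - 2 * m) - b' n.+1 * c n m).

(* [W_(n - 2m)], with the convention [W_k = 0] for [k < 0]. *)
Local Definition Wsub n m := if (2 * m <= n)%N then W (n - 2 * m) else 0.

Local Definition expansion n := \sum_(0 <= m < n.+1) c n m *: Wsub n m.

Lemma Wsub_SS n m : Wsub n.+2 m.+1 = Wsub n m.
Proof. by rewrite /Wsub !mulnS !addSn add0n ltnS !subSS. Qed.

Lemma Wsub_out n m : (n < 2 * m)%N -> Wsub n m = 0.
Proof. by rewrite /Wsub ltnNge => /negbTE ->. Qed.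

Lemma Wsub_rec n m :
  'X * Wsub n.+1 m = a (n.+2 - 2 * m) *: Wsub n.+2 m + b (n.+1 - 2 * m) *: Wsub n m.
Proof.
case: W_rec => W0 W1 WS; rewrite /Wsub.
have [le | gt] := leqP (2 * m)%N n.
  rewrite !leqW // !subSn ?leqW //; exact: WS.
rewrite scaler0 addr0.
have [eq | ne] := eqVneq (2 * m)%N n.+1.
  by rewrite eq leqnn leqnSn subnn subSnn W0 mulr1.
have lt : (n.+1 < 2 * m)%N by rewrite ltn_neqAle eq_sym ne gt.
rewrite leqNgt lt mulr0 (_ : n.+2 - 2 * m = 0)%N ?a0 ?scale0r //.
by apply/eqP; rewrite subn_eq0.
Qed.

Lemma expansion_rec n :
  'X * expansion n.+1 = a n.+2 *: expansion n.+2 + b' n.+1 *: expansion n.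
Proof.
rewrite /expansion mulr_sumr.
under eq_bigr => m _ do rewrite -scalerAr Wsub_rec scalerDr !scalerA.
rewrite big_split /= big_nat_recl // [X in _ + X]big_nat_recr //=.
rewrite [in RHS]big_nat_recl // [in RHS]big_nat_recr //=.
rewrite (@Wsub_out n n.+1) ?(@Wsub_out n.+2 n.+2) ?scaler0 ?addr0; try lia.
have sub_S2 m : (n.+2 - 2 * m.+1 = n - 2 * m)%N by lia.
under eq_bigr => m _ do rewrite Wsub_SS sub_S2.
under [in RHS]eq_bigr => m _ do rewrite Wsub_SS.
rewrite muln0 subn0 !c_0 mul1r scalerDr scalerA mulr1 -!addrA; congr (_ + _).
rewrite !scaler_sumr -!big_split /=; apply: eq_bigr => m _.
rewrite !scalerA -!scalerDl.
have [le | gt] := leqP (2 * m)%N n; last by rewrite Wsub_out ?scaler0.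
by rewrite c_rec // subrK.
Qed.

Lemma expansion_three_term : three_term a b' expansion.
Proof.
case: W_rec => W0 W1 _; split; last exact: expansion_rec.
  by rewrite /expansion big_nat1 c_0 scale1r /Wsub W0.
rewrite /expansion big_nat_recr //= big_nat1 (@Wsub_out 1 1) // scaler0 addr0 c_0.
by rewrite scale1r /Wsub W1.
Qed.

Lemma three_term_expansion n :
  V n = \sum_(0 <= m < (n./2).+1) c n m *: W (n - 2 * m).
Proof.
rewrite (three_term_uniq a_neq0 V_rec expansion_three_term) /expansion.
rewrite (big_cat_nat _ (n := (n./2).+1)) //=; last by rewrite ltnS leq_half_double; lia.
rewrite [X in _ + X]big_nat_cond [X in _ + X]big1 ?addr0.
  apply: eq_big_nat => m /andP [_ le_m].
  by rewrite /Wsub mul2n -geq_half_double -ltnS le_m.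
move=> m /andP [/andP [lt_m _] _].
by rewrite Wsub_out ?scaler0 // mul2n -ltn_half_double.
Qed.

End Expansion.

End ThreeTermRecurrence.

(* Over an abstract field, where the [field] tactic applies (it does not
   terminate on the concrete field [Qq]).  At [Q := q], [qnum], [qden_at] and
   the [coef_*] are convertible to [qint], [qden] and the coefficients of
   [theorem2p7]. *)
Section QuantumCoefficients.

Variables (F : fieldType) (Q : F).
Hypotheses (Q_neq0 : Q != 0) (Q_nonroot : forall k, (0 < k)%N -> Q ^+ k != 1).

Definition qnum (n : nat) : F := (Q ^ n%:Z - Q ^ (- n%:Z)) / (Q ^ 1 - Q ^ (-1)).

Definition qden_at (m : nat) : F := \prod_(1 <= i < m.+1) (1 - Q ^ (- (4 * i%:Z))).

Definition Delta_lower (k : nat) : F := Q ^ k.-1 / (1 - Q ^ (-2)).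

Definition P_lower (t : bool) (k : nat) : F := if odd k == t then qnum k else 0.

Definition coef_P_Delta (t : bool) (n m : nat) : F :=
  Q ^ (- (m%:Z * (2 * m%:Z + 1 - 2 * dlt t n))) / qden_at m.

Definition coef_Delta_P (t : bool) (n m : nat) : F :=
  (-1) ^+ m * Q ^ (- (m%:Z * (2 * (1 - dlt t n) + 1))) / qden_at m.

Lemma Qpow_neq0 k : Q ^+ k != 0.
Proof. exact: expf_neq0. Qed.

Lemma Qpow_sub1_neq0 k : (0 < k)%N -> Q ^+ k - 1 != 0.
Proof. by move=> k_gt0; rewrite subr_eq0 Q_nonroot. Qed.

Lemma qnumE n : qnum n = (Q ^+ n - (Q ^+ n)^-1) / (Q - Q^-1).
Proof. by rewrite /qnum -exprnN. Qed.

Lemma qnum0 : qnum 0 = 0.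
Proof. by rewrite qnumE expr0 invr1 subrr mul0r. Qed.

Lemma qnum_neq0 n : (0 < n)%N -> qnum n != 0.
Proof.
move=> n_gt0; rewrite qnumE mulf_eq0 invr_eq0 negb_or.
have sub_inv_neq0 k : (0 < k)%N -> Q ^+ k - (Q ^+ k)^-1 != 0.
  move=> k_gt0; have kk_gt0 : (0 < k + k)%N by rewrite addn_gt0 k_gt0.
  apply: (contraNneq _ (Q_nonroot kk_gt0)) => /subr0_eq eq.
  by rewrite exprD {2}eq divff ?Qpow_neq0.
by rewrite sub_inv_neq0 // -(expr1 Q) sub_inv_neq0.
Qed.

Lemma qden_atS m : qden_at m.+1 = qden_at m * (1 - (Q ^+ 4 * (Q ^+ m) ^+ 4)^-1).
Proof.
rewrite /qden_at big_nat_recr //= -exprMn -exprS -exprM mulnC.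
by rewrite -exprnN.
Qed.

Lemma qden_at_neq0 m : qden_at m != 0.
Proof.
rewrite /qden_at prodf_seq_neq0; apply/allP => i; rewrite mem_index_iota => /andP [i_gt0 _].
rewrite (_ : 4 * i%:Z = (4 * i)%N) // -exprnN subr_eq0 eq_sym invr_eq1 Q_nonroot //.
by rewrite muln_gt0.
Qed.

Lemma Delta_lowerE k : Delta_lower k.+1 = Q ^+ k / (1 - (Q ^+ 2)^-1).
Proof. by []. Qed.

Lemma Qpow_subn2 n m : (2 * m <= n)%N -> Q ^+ (n - 2 * m) = Q ^+ n / (Q ^+ m) ^+ 2.
Proof. by move=> le; rewrite expfB_cond ?(negbTE Q_neq0) // mulnC exprM. Qed.

Definition coef_P_Delta0 (m : nat) : F := Q ^ (- (m%:Z * (2 * m%:Z + 1))) / qden_at m.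

Definition coef_Delta_P0 (m : nat) : F := (-1) ^+ m * Q ^ (- (m * 3)%N%:Z) / qden_at m.

Lemma coef_P_Delta0S m :
  coef_P_Delta0 m.+1 =
    coef_P_Delta0 m * ((Q ^+ 3 * (Q ^+ m) ^+ 4)^-1 / (1 - (Q ^+ 4 * (Q ^+ m) ^+ 4)^-1)).
Proof.
rewrite /coef_P_Delta0 qden_atS.
rewrite (_ : - _ = - (m%:Z * (2 * m%:Z + 1)) - (3 + m * 4)%N%:Z); last by lia.
rewrite expfzDr // -exprnN exprD exprM; field.
by rewrite Qpow_neq0 Q_neq0 qden_at_neq0 -exprS -exprM Qpow_sub1_neq0.
Qed.

Lemma coef_Delta_P0S m :
  coef_Delta_P0 m.+1 = coef_Delta_P0 m * (- (Q ^+ 3)^-1 / (1 - (Q ^+ 4 * (Q ^+ m) ^+ 4)^-1)).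
Proof.
rewrite /coef_Delta_P0 qden_atS exprS -!exprnN mulSn exprD; field.
by rewrite !Qpow_neq0 Q_neq0 qden_at_neq0 -exprS -exprM Qpow_sub1_neq0.
Qed.

Lemma coef_P_Delta_parity t n m :
  coef_P_Delta t n m =
    (if odd n == t then (Q ^+ m) ^+ 2 else 1) * coef_P_Delta0 m.
Proof.
rewrite /coef_P_Delta /coef_P_Delta0 /dlt.
case: (odd n == t); last by rewrite mulr0 subr0 mul1r.
rewrite (_ : - _ = - (m%:Z * (2 * m%:Z + 1)) + (m * 2)%N%:Z); last by lia.
by rewrite expfzDr // -exprnP exprM mulrAC mulrC.
Qed.

Lemma coef_Delta_P_parity t n m :
  coef_Delta_P t n m =
    (if odd n == t then (Q ^+ m) ^+ 2 else 1) * coef_Delta_P0 m.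
Proof.
rewrite /coef_Delta_P /coef_Delta_P0 /dlt.
case: (odd n == t); last by rewrite subr0 mul1r; congr (_ * Q ^ _ / _); lia.
rewrite (_ : - _ = - (m * 3)%N%:Z + (m * 2)%N%:Z); last by lia.
by rewrite expfzDr // -exprnP exprM; ring.
Qed.

Lemma coef_P_Delta_0 t n : coef_P_Delta t n 0 = 1.
Proof. by rewrite /coef_P_Delta mul0r oppr0 expr0z /qden_at big_geq // divr1. Qed.

Lemma coef_Delta_P_0 t n : coef_Delta_P t n 0 = 1.
Proof. by rewrite /coef_Delta_P mul0r oppr0 expr0z /qden_at big_geq // mulr1 divr1. Qed.

Lemma coef_P_Delta_rec t n m : (2 * m <= n)%N ->
  qnum n.+2 * coef_P_Delta t n.+2 m.+1 =
    coef_P_Delta t n.+1 m.+1 * qnum (n - 2 * m)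
    + coef_P_Delta t n.+1 m * Delta_lower (n.+1 - 2 * m) - P_lower t n.+1 * coef_P_Delta t n m.
Proof.
move=> le; rewrite !coef_P_Delta_parity coef_P_Delta0S /P_lower subSn // Delta_lowerE.
rewrite !qnumE Qpow_subn2 // (exprSr Q n.+1) (exprSr Q n) (exprS Q m) /=.
by case: (odd n); case: t => /=; field;
  rewrite -?expr2 !Qpow_neq0 Q_neq0 -exprS -exprM !Qpow_sub1_neq0 ?muln_gt0.
Qed.

Lemma coef_Delta_P_rec t n m : (2 * m <= n)%N ->
  qnum n.+2 * coef_Delta_P t n.+2 m.+1 =
    coef_Delta_P t n.+1 m.+1 * qnum (n - 2 * m)
    + coef_Delta_P t n.+1 m * P_lower t (n.+1 - 2 * m) - Delta_lower n.+1 * coef_Delta_P t n m.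
Proof.
move=> le; rewrite !coef_Delta_P_parity coef_Delta_P0S /P_lower Delta_lowerE.
rewrite oddB ?leqW // oddM andFb addbF subSn //.
rewrite !qnumE (exprSr Q (n - 2 * m)) Qpow_subn2 // (exprSr Q n.+1) (exprSr Q n) (exprS Q m) /=.
by case: (odd n); case: t => /=; field;
  rewrite -?expr2 !Qpow_neq0 Q_neq0 -exprS -exprM !Qpow_sub1_neq0 ?muln_gt0.
Qed.

End QuantumCoefficients.

Lemma q_neq0 : q != 0.
Proof. by rewrite /q tofrac_eq0 polyX_eq0. Qed.

Lemma q_nonroot k : (0 < k)%N -> q ^+ k != 1.
Proof.
move=> k_gt0; rewrite /q -tofracXn -tofrac1 tofrac_eq.
apply: contraTneq k_gt0 => Xk_eq1.
by have := size_polyXn rat k; rewrite Xk_eq1 size_poly1 => -[<-].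
Qed.

Lemma qint0 : qint 0 = 0.
Proof. exact: qnum0. Qed.

Lemma qint_neq0 n : qint n.+1 != 0.
Proof. exact: (qnum_neq0 q_neq0 q_nonroot). Qed.

Lemma DeltaSS n :
  Delta n.+2 = (qint n.+2)^-1 *: ('X * Delta n.+1 - Delta_lower q n.+1 *: Delta n).
Proof. by rewrite /Delta /=; case: (DeltaPair n). Qed.

Lemma Delta_three_term : three_term qint (Delta_lower q) Delta.
Proof.
split=> [//||n]; first by rewrite /Delta /= mulr1 scalerA divff ?qint_neq0 ?scale1r.
by rewrite DeltaSS scalerA divff ?qint_neq0 // scale1r subrK.
Qed.

Definition Pnum (t : bool) (n : nat) : U :=
  if ~~ odd n then Pprod t n else if t then 'X * Pprod t n else Pprod t n %/ 'X.

Lemma Pprod0 t : Pprod t 0 = 1.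
Proof. by rewrite /Pprod big_geq. Qed.

Lemma PprodS t n :
  Pprod t n.+1 = Pprod t n * (if odd n == t then 'X ^+ 2 - (qint n ^+ 2)%:P else 1).
Proof. by rewrite /Pprod big_mkcond big_nat_recr //= -big_mkcond. Qed.

Lemma Pprod_false1 : Pprod false 1 = 'X ^+ 2.
Proof. by rewrite PprodS Pprod0 mul1r /= qint0 expr0n subr0. Qed.

Lemma X_dvd_Pprod_false n : 'X %| Pprod false n.+1.
Proof.
elim: n => [|n IH]; first by rewrite Pprod_false1 dvdp_mulr.
by rewrite PprodS dvdp_mulr.
Qed.

(* Multiplying by B clears the division by B in [Pnum], so that the recurrence
   of [Pnum] becomes a ring identity between products [Pprod]. *)
Lemma X_Pnum t n :
  'X * Pnum t n = 'X ^+ (if ~~ odd n then 1 else if t then 2 else 0) * Pprod t n.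
Proof.
rewrite /Pnum; case: n => [|n]; first by rewrite expr1.
case: (odd n.+1) => /=; last by rewrite expr1.
by case: t; rewrite ?mulrA // mul1r mulrC divpK // X_dvd_Pprod_false.
Qed.

Lemma Pnum_three_term t :
  three_term (fun=> 1) (fun k => if odd k == t then qint k ^+ 2 else 0) (Pnum t).
Proof.
split=> [|| n]; first by rewrite /Pnum /= Pprod0.
  rewrite scale1r /Pnum /=; case: t; first by rewrite PprodS Pprod0 !mulr1.
  by rewrite Pprod_false1 expr2 mulpK ?polyX_eq0.
apply: (@mulfI _ 'X); first by rewrite polyX_eq0.
rewrite scale1r mulrDr -scalerAr !X_Pnum !PprodS /=.
move: (Pprod t n) (qint n) (qint n.+1) => p a b.
by case: (odd n); case: t => /=; rewrite -mul_polyC; ring.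
Qed.

Lemma P_three_term t : three_term qint (P_lower q t) (P t).
Proof.
apply: three_term_normalize qint_neq0 _ (Pnum_three_term t) => n.
by rewrite /P_lower; case: ifP; rewrite ?mulr0 // expr2.
Qed.

Theorem theorem2p7 (t : bool) (n : nat) :
  P t n =
    \sum_(0 <= m < (n./2).+1)
      (qpow (- (m%:Z * (2 * m%:Z + 1 - 2 * dlt t n))) / qden m)
        *: Delta (n - 2 * m)
  /\
  Delta n =
    \sum_(0 <= m < (n./2).+1)
      ((-1) ^+ m * qpow (- (m%:Z * (2 * (1 - dlt t n) + 1))) / qden m)
        *: P t (n - 2 * m).
Proof.
have rec_P_Delta := coef_P_Delta_rec q_neq0 q_nonroot t.
have rec_Delta_P := coef_Delta_P_rec q_neq0 q_nonroot t.
split.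
- exact: (three_term_expansion qint0 qint_neq0 Delta_three_term (P_three_term t)
            (coef_P_Delta_0 q t) rec_P_Delta).
- exact: (three_term_expansion qint0 qint_neq0 (P_three_term t) Delta_three_term
            (coef_Delta_P_0 q t) rec_Delta_P).
Qed.
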